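(* Let $\mathcal{A}$ be a central and essential arrangement in $\mathbb{Q}^l$ as in the context, with $\lcm$-period $\rho_0$, and let $p$ be a prime. Then $p$ is coprime to $\rho_0$ if and only if $\mathcal{A}$ and $\mathcal{A}_p$ are combinatorially equivalent.
   Context: $\mathcal{A}=\{H_1,\dots,H_n\}$: $n$ distinct linear hyperplanes in $\mathbb{Q}^l$ with $\bigcap H_i=\{0\}$, $H_i=\{\alpha_i=0\}$, $\alpha_i=\sum_{k=1}^lc_{ki}x_k$ with $c_{ki}\in\mathbb{Z}$ not all divisible by any prime. $\mathcal{A}_p$ is the indexed family of the $n$ hyperplanes $(H_i)_p=\{(\alpha_i)_p=0\}$ in $\mathbb{F}_p^l$, where $(\alpha_i)_p$ is the reduction of $\alpha_i$ mod $p$. Let $C=(c_{ki})\in\mathrm{Mat}_{l\times n}(\mathbb{Z})$ with columns $c_1,\dots,c_n$; for nonempty $J=\{i_1<\dots<i_k\}\subseteq[n]$, $C_J=(c_{i_1},\dots,c_{i_k})$, with Smith normal form having nonzero diagonal entries $e_{J,1}\mid\dots\mid e_{J,r}$ (positive), $r=\mathrm{rk}(C_J)$; $e(J)=e_{J,r}$ and $\rho_0=\lcm\{e(J): J\subseteq[n],\ 1\le|J|\le l\}$. Two indexed families $\{H^{(1)}_i\}_{i=1}^n$ in $K_1^l$ and $\{H^{(2)}_i\}_{i=1}^n$ in $K_2^l$ are combinatorially equivalent if $\dim(H^{(1)}_{i_1}\cap\dots\cap H^{(1)}_{i_k})=\dim(H^{(2)}_{i_1}\cap\dots\cap H^{(2)}_{i_k})$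 for all $1\le i_1<\dots<i_k\le n$ (dimension of $\emptyset$ is $-1$). *)

From HB Require Import structures.
From mathcomp Require Import all_boot all_order all_algebra.
Set Implicit Arguments. Unset Strict Implicit. Unset Printing Implicit Defensive.
Import Order.TTheory GRing.Theory Num.Theory.
Local Open Scope ring_scope.

(* Integer matrix C : 'M[int]_(l, n); column i holds the coefficients c_{ki}
   of alpha_i = sum_k c_{ki} x_k.  A point x of K^l is a row vector, and
   alpha_i(x) = x *m col i C. *)

(* Reduction of C into a ring K (K = rat for A, K = 'F_p for A_p). *)
Definition mx_in (K : nzRingType) l n (C : 'M[int]_(l, n)) : 'M[K]_(l, n) :=
  map_mx (fun z : int => z%:~R) C.

Definition hyperplane (K : fieldType) l n (C : 'M[int]_(l, n)) (i : 'I_n)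
  : 'M[K]_l := kermx (col i (mx_in K C)).

Definition dim_int (K : fieldType) l n (C : 'M[int]_(l, n)) (J : {set 'I_n})
  : nat := \rank (\bigcap_(i in J) hyperplane K C i)%MS.

Definition comb_equiv (K1 K2 : fieldType) l n (C : 'M[int]_(l, n)) : Prop :=
  forall J : {set 'I_n}, J != set0 -> dim_int K1 C J = dim_int K2 C J.

Definition subcols l n (C : 'M[int]_(l, n)) (J : {set 'I_n})
  : 'M[int]_(l, #|J|) := colsub (fun j : 'I_#|J| => enum_val j) C.

Definition snf_diag m k (A : 'M[int]_(m, k)) : seq int :=
  s2val (projT3 (projT3 (int_Smith_normal_form A))).

(* e(J): the last nonzero (positive) invariant factor e_{J,r}, r = rk C_J. *)
Definition eJ l n (C : 'M[int]_(l, n)) (J : {set 'I_n}) : nat :=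
  absz ((snf_diag (subcols C J))`_(\rank (mx_in rat (subcols C J))).-1).

Definition rho0 l n (C : 'M[int]_(l, n)) : nat :=
  \big[lcmn/1%N]_(J : {set 'I_n} | (0 < #|J| <= l)%N) eJ C J.

From HB Require Import structures.
From mathcomp Require Import all_boot all_order all_algebra.
From mathcomp Require Import zify.
Set Implicit Arguments. Unset Strict Implicit. Unset Printing Implicit Defensive.
Import Order.TTheory GRing.Theory Num.Theory.
Local Open Scope ring_scope.

(* Write C_J = L diag(d) R with L, R unimodular and d_1 | d_2 | ... (Smith
   normal form).  Over any field K the rank of C_J is the number of leading
   d_i that do not vanish in K; hence rank_p C_J <= rank_Q C_J, with equality
   iff p does not divide e(J) = d_r, r = rank_Q C_J.  As dim X_J = l - rk C_J,
   this compares the dimensions of X_J over Q and F_p for every J.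
   Index sets of size <= l suffice: any X_J over Q is already cut out by a
   subset J' of J with |J'| <= codim X_J, and then
   dim_p X_J <= dim_p X_J' = dim_Q X_J' = dim_Q X_J <= dim_p X_J.
   Conversely, primitive columns are nonzero, so rank_Q C_J > 0 for J nonempty
   and equal dimensions force p not to divide e(J). *)

Definition vanishes_in (K : nzRingType) : pred int := fun z => z%:~R == 0 :> K.

Lemma vanishes_in0 (K : nzRingType) : vanishes_in K 0.
Proof. by rewrite /vanishes_in mulr0z. Qed.

Lemma vanishes_in_dvdz (K : nzRingType) a b :
  (a %| b)%Z -> vanishes_in K a -> vanishes_in K b.
Proof. by case/dvdzP=> q -> /eqP a0; rewrite /vanishes_in intrM a0 mulr0. Qed.

Lemma sub_vanishes_in_rat (K : nzRingType) :
  subpred (vanishes_in rat) (vanishes_in K).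
Proof.
by move=> z; rewrite /vanishes_in intr_eq0 => /eqP->; rewrite mulr0z.
Qed.

Lemma vanishes_in_Fp p z : prime p -> vanishes_in 'F_p z = (p %| `|z|)%N.
Proof.
move=> p_pr; rewrite /vanishes_in (dvdn_pcharf (pchar_Fp p_pr)).
by case: z => m //; rewrite NegzE mulrNz oppr_eq0.
Qed.

Lemma ltn_find_sorted_dvdz (P : pred int) (d : seq int) i :
  P 0 -> (forall a b, (a %| b)%Z -> P a -> P b) -> sorted dvdz d ->
  (i < find P d)%N = ~~ P d`_i.
Proof.
move=> P0 P_dvd d_sorted; apply/idP/idP => [/(before_find 0)-> // | NPi].
rewrite ltnNge; apply: contra NPi => find_le_i.
have [i_lt_d | d_le_i] := ltnP i (size d); last by rewrite nth_default.
have hasP : has P d by rewrite has_find (leq_ltn_trans find_le_i).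
apply: P_dvd (nth_find 0 hasP).
apply: (sorted_leq_nth (@dvdz_trans) (@dvdzz)) => //.
by rewrite inE -has_find.
Qed.

Lemma ltn_find_vanishes_in (K : nzRingType) (d : seq int) i :
  sorted dvdz d -> (i < find (vanishes_in K) d)%N = ~~ vanishes_in K d`_i.
Proof.
by apply: ltn_find_sorted_dvdz; [exact: vanishes_in0 | exact: vanishes_in_dvdz].
Qed.

Lemma map_unitmx_rmorph (R S : comUnitRingType) (f : {rmorphism R -> S}) m
    (A : 'M[R]_m) :
  A \in unitmx -> map_mx f A \in unitmx.
Proof. by rewrite !unitmxE det_map_mx; apply: rmorph_unit. Qed.

Section RankOverField.

Variable K : fieldType.

Lemma rank_map_diag_sorted_dvdz m k (d : seq int) : sorted dvdz d ->
  \rank (map_mx intr (\matrix_(i < m, j < k) (d`_i *+ (i == j :> nat)))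
         : 'M[K]_(m, k))
  = minn (minn m k) (find (vanishes_in K) d).
Proof.
move=> d_sorted; set t := minn (minn m k) _; set D := map_mx _ _.
(* The entries d_i with i >= t vanish in K: D is pid_mx t up to an invertible
   diagonal factor. *)
pose e : 'rV[K]_k := \row_j (if (j < t)%N then (d`_j)%:~R else 1).
have -> : D = pid_mx t *m diag_mx e.
  apply/matrixP=> i j; rewrite mul_mx_diag !mxE.
  case: eqP => [ij|_]; last by rewrite mulr0n rmorph0 mul0r.
  rewrite mulr1n /= ij; case: ifP => [_|j_ge_t]; first by rewrite mul1r.
  rewrite mul0r; apply/eqP/negbNE.
  change (~~ ~~ vanishes_in K d`_j); rewrite -ltn_find_vanishes_in //.
  by move/negbT: j_ge_t (ltn_ord i) (ltn_ord j); rewrite /t -ij; lia.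
have [t_le_m t_le_k] : (t <= m)%N /\ (t <= k)%N by rewrite /t; lia.
rewrite mxrankMfree ?rank_pid_mx // row_free_unit unitmxE det_diag unitfE.
apply/prodf_neq0 => j _; rewrite mxE.
case: ifP => [j_lt_t|_]; last exact: oner_neq0.
change (~~ vanishes_in K d`_j); rewrite -ltn_find_vanishes_in //.
by move: j_lt_t; rewrite /t; lia.
Qed.

Lemma mxrank_mx_in_snf m k (A : 'M[int]_(m, k)) :
  \rank (mx_in K A) = minn (minn m k) (find (vanishes_in K) (snf_diag A)).
Proof.
rewrite /mx_in /snf_diag.
case: int_Smith_normal_form => L uL [R uR [d d_sorted A_eq]] /=.
have -> : (fun z : int => z%:~R : K) = intr by [].
rewrite {}A_eq !map_mxM mxrankMfree ?row_free_unit ?map_unitmx_rmorph //.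
rewrite eqmxMfull ?row_full_unit ?map_unitmx_rmorph //.
exact: rank_map_diag_sorted_dvdz.
Qed.

End RankOverField.

Lemma sorted_snf_diag m k (A : 'M[int]_(m, k)) : sorted dvdz (snf_diag A).
Proof. by rewrite /snf_diag; case: int_Smith_normal_form => ? ? [? ? []]. Qed.

Lemma mxrank_mx_in_le_rat (K : fieldType) m k (A : 'M[int]_(m, k)) :
  (\rank (mx_in K A) <= \rank (mx_in rat A))%N.
Proof.
have fK_le_fQ := sub_find (@sub_vanishes_in_rat K) (snf_diag A).
rewrite !mxrank_mx_in_snf leq_min geq_minl.
exact: leq_trans (geq_minr _ _) fK_le_fQ.
Qed.

Lemma mxrank_mx_in_Fp_eq_rat p m k (A : 'M[int]_(m, k))
    (r := \rank (mx_in rat A)) (e := absz (snf_diag A)`_r.-1) :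
  prime p -> (0 < r)%N -> (\rank (mx_in 'F_p A) == r) = ~~ (p %| e)%N.
Proof.
move=> p_pr r_gt0.
have r_le : (r <= minn m k)%N by rewrite /r mxrank_mx_in_snf geq_minl.
rewrite /e -vanishes_in_Fp // -ltn_find_vanishes_in ?sorted_snf_diag //.
by rewrite prednK // eqn_leq mxrank_mx_in_le_rat mxrank_mx_in_snf leq_min r_le.
Qed.

Section Flats.

Variables (K : fieldType) (l n : nat) (C : 'M[int]_(l, n)).
Implicit Types J : {set 'I_n}.

Definition flat J : 'M[K]_l := (\bigcap_(i in J) hyperplane K C i)%MS.

Lemma sub_flat m (X : 'M[K]_(m, l)) J :
  (X <= flat J)%MS = (X *m mx_in K (subcols C J) == 0).
Proof.
rewrite [mx_in K _]map_mxsub mulmx_colsub.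
apply/sub_bigcapmxP/eqP => [X_sub | XC0 i iJ].
  apply/matrixP => a j; have := X_sub _ (enum_valP j).
  rewrite sub_kermx colEsub mulmx_colsub => /eqP/matrixP/(_ a 0).
  by rewrite !mxE.
rewrite sub_kermx colEsub mulmx_colsub -colEsub -(enum_rankK_in iJ iJ).
by rewrite -col_colsub XC0 col0.
Qed.

Lemma dim_int_rank J : dim_int K C J = (l - \rank (mx_in K (subcols C J)))%N.
Proof.
rewrite /dim_int -/(flat J) -mxrank_ker; apply/eqmx_rank/andP.
by split; [rewrite sub_kermx -sub_flat | rewrite sub_flat -sub_kermx].
Qed.

Lemma flatS J1 J2 : J1 \subset J2 -> (flat J2 <= flat J1)%MS.
Proof.
move=> sJ12; apply/sub_bigcapmxP => i iJ1.
exact: bigcapmx_inf (subsetP sJ12 i iJ1) (submx_refl _).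
Qed.

Lemma dim_intS J1 J2 : J1 \subset J2 -> (dim_int K C J2 <= dim_int K C J1)%N.
Proof. by move/flatS/mxrankS. Qed.

Lemma dim_int_set0 : dim_int K C set0 = l.
Proof. by rewrite /dim_int big_set0 mxrank1. Qed.

Lemma sub_flatU1 m (X : 'M[K]_(m, l)) i J :
  (X <= flat (i |: J))%MS = (X <= hyperplane K C i)%MS && (X <= flat J)%MS.
Proof.
apply/sub_bigcapmxP/andP => [X_sub | [X_sub_i /sub_bigcapmxP X_sub_J] j].
  split; [|apply/sub_bigcapmxP => j jJ]; apply: X_sub.
    exact: setU11.
  by rewrite !inE jJ orbT.
by rewrite !inE => /predU1P[-> | /X_sub_J].
Qed.

Lemma dim_int_setU1_lt i J : ~~ (flat J <= hyperplane K C i)%MS ->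
  (dim_int K C (i |: J) < dim_int K C J)%N.
Proof.
move=> notsub; have := submx_refl (flat (i |: J)).
rewrite sub_flatU1 => /andP[sub_i sub_J].
have [le_rank eq_rank] := mxrank_leqif_sup sub_J.
rewrite /dim_int -!/(flat _) ltn_neqAle le_rank andbT eq_rank.
by apply: contra notsub => /submx_trans; apply.
Qed.

Lemma flat_small_subset J : exists2 J' : {set 'I_n}, J' \subset J &
  (flat J' <= flat J)%MS /\ (#|J'| + dim_int K C J' <= l)%N.
Proof.
elim: {J}_.+1 {-2}J (ltnSn #|J|) => // N IH J cardJ.
have [->|[i iJ]] := set_0Vmem J.
  by exists set0; rewrite ?sub0set // cards0 dim_int_set0.
have [|J0 sJ0 [flatJ0 cardJ0]] := IH (J :\ i).
  by rewrite (cardsD1 i J) iJ in cardJ.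
have i_notin_J0 : i \notin J0.
  by apply/negP => /(subsetP sJ0); rewrite !inE eqxx.
rewrite -(setD1K iJ).
have [Hi | notHi] := boolP (flat J0 <= hyperplane K C i)%MS.
  by exists J0; rewrite ?sub_flatU1 ?Hi // (subset_trans sJ0) ?subsetUr.
exists (i |: J0); first by rewrite setUS.
have := submx_refl (flat (i |: J0)); rewrite sub_flatU1 => /andP[sub_i sub_J0].
split; first by rewrite sub_flatU1 sub_i (submx_trans sub_J0 flatJ0).
rewrite cardsU1 i_notin_J0 add1n addSn -addnS (leq_trans _ cardJ0) //.
by rewrite leq_add2l dim_int_setU1_lt.
Qed.

End Flats.

Lemma dim_int_rat_le (K : fieldType) l n (C : 'M[int]_(l, n)) J :
  (dim_int rat C J <= dim_int K C J)%N.
Proof. by rewrite !dim_int_rank leq_sub2l // mxrank_mx_in_le_rat. Qed.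

Lemma comb_equiv_small (K : fieldType) l n (C : 'M[int]_(l, n)) :
  (forall J : {set 'I_n},
     (0 < #|J| <= l)%N -> dim_int rat C J = dim_int K C J) ->
  comb_equiv rat K C.
Proof.
move=> small J _; have [J' sJ' [flatJ' cardJ']] := flat_small_subset rat C J.
have eqJ' : dim_int rat C J' = dim_int K C J'.
  have [-> | J'_nz] := eqVneq J' set0; first by rewrite !dim_int_set0.
  by apply: small; rewrite card_gt0 J'_nz (leq_trans (leq_addr _ _) cardJ').
apply/eqP; rewrite eqn_leq dim_int_rat_le /=.
by rewrite (leq_trans (dim_intS K C sJ')) // -eqJ' mxrankS.
Qed.

Lemma dim_int_Fp_eq_rat p l n (C : 'M[int]_(l, n)) J :
  prime p -> (0 < \rank (mx_in rat (subcols C J)))%N ->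
  dim_int rat C J = dim_int 'F_p C J <-> coprime p (eJ C J).
Proof.
move=> p_pr r_gt0.
rewrite prime_coprime // -mxrank_mx_in_Fp_eq_rat // !dim_int_rank.
have rQ_le := rank_leq_row (mx_in rat (subcols C J)).
have rp_le := rank_leq_row (mx_in 'F_p (subcols C J)).
split=> [eq_dim | /eqP-> //].
by apply/eqP; rewrite -(subKn rp_le) -eq_dim subKn.
Qed.

Lemma mxrank_subcols_gt0 l n (C : 'M[int]_(l, n)) (J : {set 'I_n}) i :
  i \in J -> col i C != 0 -> (0 < \rank (mx_in rat (subcols C J)))%N.
Proof.
move=> iJ; apply: contraNT; rewrite -eqn0Ngt mxrank_eq0 => /eqP/matrixP CJ0.
apply/eqP/matrixP => k j; have := CJ0 k (enum_rank_in iJ i).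
by rewrite !mxE enum_rankK_in // => /eqP; rewrite intr_eq0 => /eqP.
Qed.

Lemma coprime_biglcm (I : finType) (P : pred I) (F : I -> nat) p :
  coprime p (\big[lcmn/1%N]_(i | P i) F i) <->
  (forall i, P i -> coprime p (F i)).
Proof.
split=> [cop i Pi | cop].
  by apply: coprime_dvdr cop; apply: biglcmn_sup Pi (dvdnn _).
apply: (big_ind (coprime p)) => // [|a b ca cb]; first exact: coprimen1.
apply: (@coprime_dvdr _ (a * b)).
  by rewrite dvdn_lcm dvdn_mulr ?dvdn_mull.
by rewrite coprimeMr ca cb.
Qed.

Theorem corollary7p9 (l n : nat) (C : 'M[int]_(l, n)) (p : nat)
  (Hprim : forall (i : 'I_n) (q : nat), prime q ->
             exists k : 'I_l, ~~ (q%:Z %| C k i)%Z)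
  (Hdistinct : forall i j : 'I_n, i != j ->
             ~~ (hyperplane rat C i == hyperplane rat C j)%MS)
  (Hessential : (\bigcap_(i < n) hyperplane rat C i == (0 : 'M[rat]_l))%MS)
  (Hp : prime p) :
  coprime p (rho0 C) <-> comb_equiv rat [the fieldType of 'F_p] C.
Proof.
have rank_gt0 (J : {set 'I_n}) :
    (0 < #|J|)%N -> (0 < \rank (mx_in rat (subcols C J)))%N.
  rewrite card_gt0 => /set0Pn[i iJ]; apply: mxrank_subcols_gt0 iJ _.
  have [k C_ki] := Hprim i p Hp.
  apply: contraNneq C_ki => /matrixP/(_ k 0).
  by rewrite !mxE => ->; rewrite dvdz0.
rewrite /rho0 coprime_biglcm; split=> [cop | ce J /andP[J_gt0 _]].
  apply: comb_equiv_small => J J_range; have /andP[J_gt0 _] := J_range.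
  by apply/dim_int_Fp_eq_rat; [| exact: rank_gt0 | exact: cop].
apply/dim_int_Fp_eq_rat => //; first exact: rank_gt0.
by apply: ce; rewrite -card_gt0.
Qed.
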